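(* Let $q$ be a prime power, $M\geq 2$ an integer, and let $f_1,f_2\in\mathbb{F}_q[x]$ be monic irreducible polynomials (different from $x$) both of degree $n$ and both of exponent $e$. Then for every integer $l\geq 1$, $f_1(x^M)$ has a SRIM factor of degree $2l$ if and only if $f_2(x^M)$ has a SRIM factor of degree $2l$.
   Context: The exponent of a monic irreducible polynomial $f\in\mathbb{F}_q[x]$ with $f(0)\neq0$ is the multiplicative order of any of its roots in its splitting field. For a monic polynomial $f$ of degree $r$ with $f(0)\neq 0$, $f^*(x)=f(0)^{-1}x^rf(x^{-1})$; $f$ is self-reciprocal if $f=f^*$. A SRIM polynomial is a self-reciprocal irreducible monic polynomial. *)

From HB Require Import structures.
From mathcomp Require Import all_boot all_order all_algebra all_field.
Set Implicit Arguments. Unset Strict Implicit. Unset Printing Implicit Defensive.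
Import GRing.Theory.
Local Open Scope ring_scope.

(* Reciprocal polynomial f^*(x) = f(0)^{-1} x^r f(x^{-1}), r = deg f:
   the coefficient sequence of x^r f(1/x) is the reversed sequence of f. *)
Definition reciprocal (F : fieldType) (f : {poly F}) : {poly F} :=
  (f`_0)^-1 *: Poly (rev f).

Definition self_reciprocal (F : fieldType) (f : {poly F}) : Prop :=
  f`_0 != 0 /\ reciprocal f = f.

Definition SRIM (F : fieldType) (h : {poly F}) : Prop :=
  h \is monic /\ irreducible_poly h /\ self_reciprocal h.

Definition has_SRIM_factor (F : fieldType) (g : {poly F}) (d : nat) : Prop :=
  exists h : {poly F}, [/\ SRIM h, h %| g & (size h).-1 = d].

(* e is the exponent (order) of f: the least positive integer e with
   f | x^e - 1; for irreducible f with f(0) <> 0 this is the multiplicative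
   order of a root of f. *)
Definition poly_exponent (F : fieldType) (f : {poly F}) (e : nat) : Prop :=
  [/\ (0 < e)%N, f %| 'X^e - 1 &
      forall k : nat, (0 < k)%N -> f %| 'X^k - 1 -> (e <= k)%N].

From HB Require Import structures.
From mathcomp Require Import all_boot all_order all_algebra all_field.
From mathcomp Require Import cyclic zify.

Set Implicit Arguments.
Unset Strict Implicit.
Unset Printing Implicit Defensive.

Import GRing.Theory.

(* If h is a SRIM factor of f1(x^M) with root c, then a = c^M is a root of f1,
   hence a primitive e-th root of unity, and f2, which divides x^e - 1, has a
   root a^k with k prime to e. Pick k' = k (mod e) prime to Me: as c^(Me) = 1,
   c is a power of d = c^k', so F(d) = F(c) and the minimal polynomial g of d
   has the degree of h. It divides f2(x^M) because d^M = a^k, and it is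
   self-reciprocal because d^-1 = (c^-1)^k' with c^-1 a conjugate of c. *)

Lemma exists_coprime_addmul k e N :
  coprime k e -> 0 < N -> exists t, coprime (k + e * t) N.
Proof.
move=> cke N0; have [k0|k_gt0] := posnP k.
  by exists 1; move: cke; rewrite k0 /coprime gcd0n => /eqP->; rewrite gcd1n.
pose t := N`_(\pi(k))^'.
have ckt : coprime k t by apply: pnat_coprime (pnat_pi k_gt0) (part_pnat _ _).
exists t; rewrite -(partnC \pi(k) N0) coprimeMr; apply/andP; split.
  rewrite coprime_sym; apply: pnat_coprime (part_pnat _ _) _.
  rewrite -coprime_pi' ?addn_gt0 ?k_gt0 //.
  by rewrite /coprime gcdnDl -/(coprime _ _) coprimeMr cke.
by rewrite /coprime gcdnC addnC gcdnMDl gcdnC.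
Qed.

Local Open Scope ring_scope.

Lemma horner_Poly_rev (K : fieldType) (s : seq K) (x : K) : x != 0 ->
  (Poly (rev s)).[x] = x ^+ (size s).-1 * (Poly s).[x^-1].
Proof.
move=> x0.
have hs : (size (Poly (rev s)) <= size s)%N by rewrite -(size_rev s) size_Poly.
rewrite (horner_coef_wide _ hs) (horner_coef_wide _ (size_Poly s)) mulr_sumr.
rewrite (reindex_inj rev_ord_inj); apply: eq_bigr => -[i /= lt_is] _.
rewrite !coef_Poly nth_rev; last by rewrite ltn_subrL (leq_ltn_trans _ lt_is).
have -> : (size s - (size s - i.+1).+1 = i)%N by lia.
have -> : (size s - i.+1 = (size s).-1 - i)%N by lia.
rewrite expfB_cond; last by rewrite (negbTE x0) add0n; lia.
by rewrite exprVn mulrCA mulrA.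
Qed.

Section Reciprocal.
Variables (K : fieldType) (p : {poly K}).
Hypothesis p0 : p`_0 != 0.

Let size_p_gt0 : (0 < size p)%N.
Proof. by rewrite lt0n size_poly_eq0; apply: contraNneq p0 => ->; rewrite coef0. Qed.

Lemma size_reciprocal : size (reciprocal p) = size p.
Proof.
have last_rev_p : last 0 (rev p) = p`_0.
  by rewrite -nth_last size_rev nth_rev prednK ?subnn.
by rewrite size_scale ?invr_eq0 // (PolyK (c := 0)) ?size_rev ?last_rev_p.
Qed.

Lemma reciprocal_monic : reciprocal p \is monic.
Proof.
rewrite monicE /lead_coef size_reciprocal coefZ coef_Poly nth_rev ?prednK //.
by rewrite subnn mulVf.
Qed.

End Reciprocal.

Local Notation "p ^i" := (map_poly (in_alg _) p) (at level 2, format "p ^i").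

Section RootsInExtension.
Variables (F : fieldType) (L : fieldExtType F).
Implicit Types (p q f g h : {poly F}) (y : L).

Lemma root_map_comp_Xn p n y : root (p \Po 'X^n)^i y = root p^i (y ^+ n).
Proof. by rewrite map_comp_poly /= map_polyXn root_comp hornerXn. Qed.

Lemma root_map_dvdp p q y : p %| q -> root p^i y -> root q^i y.
Proof. by rewrite -(dvdp_map (in_alg L)); apply: root_dvdp. Qed.

Lemma map_poly_Xn_sub1 n : ('X^n - 1 : {poly F})^i = 'X^n - 1 :> {poly L}.
Proof. by rewrite rmorphB /= map_polyXn rmorph1. Qed.

Lemma root_map_Xn_sub1 n y : root ('X^n - 1)^i y = (y ^+ n == 1).
Proof. by rewrite map_poly_Xn_sub1 -unity_rootE. Qed.

Lemma polyOver1_map p : p^i \is a polyOver (1%AS : {subfield L}).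
Proof. by apply/polyOver1P; exists p. Qed.

Lemma minPoly1_irr y :
  exists g, [/\ minPoly 1 y = g^i, g \is monic & irreducible_poly g].
Proof.
have /polyOver1P[g Dg] := minPolyOver 1%AS y.
have mg : g \is monic by rewrite -(map_monic (in_alg L)) -Dg monic_minPoly.
exists g; split=> //; split=> [|q sq qg].
  by rewrite -(size_map_poly (in_alg L)) -Dg size_minPoly.
have qm : q^i %| minPoly 1 y by rewrite Dg dvdp_map.
case/orP: (minPoly_irr (polyOver1_map q) qm) => [|/eqp_size].
  by rewrite Dg eqp_map.
by rewrite size_poly1 size_map_poly => q1; rewrite q1 in sq.
Qed.

Lemma minPoly1_irredp g y :
  g \is monic -> irreducible_poly g -> root g^i y -> minPoly 1 y = g^i.
Proof.
move=> mg ig rg; have [q [Dq mq [sq _]]] := minPoly1_irr y.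
have qg : q %| g by rewrite -(dvdp_map (in_alg L)) -Dq minPoly_dvdp ?polyOver1_map.
have [_ /(_ q (negbT (gtn_eqF sq)) qg)] := ig.
by rewrite eqp_monic // Dq => /eqP->.
Qed.

Lemma irredp_dvdp_root g p y : g \is monic -> irreducible_poly g ->
  root g^i y -> root p^i y -> g %| p.
Proof.
move=> mg ig rg rp; rewrite -(dvdp_map (in_alg L)) -(minPoly1_irredp mg ig rg).
exact: minPoly_dvdp (polyOver1_map p) rp.
Qed.

Lemma irredp_coef0_neq0 g y :
  irreducible_poly g -> root g^i y -> y != 0 -> g`_0 != 0.
Proof.
move=> ig rg; apply: contraNneq => g0.
have Xg : 'X %| g by rewrite -(subr0 'X) dvdp_XsubCl rootE horner_coef0 g0.
have [_ /(_ 'X)] := ig; rewrite size_polyX => /(_ isT Xg).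
rewrite -(eqp_map (in_alg L)) map_polyX => /eqp_root rootXg.
by rewrite -rootX rootXg.
Qed.

Lemma root_reciprocal p y : y != 0 -> root p^i y -> root (reciprocal p)^i y^-1.
Proof.
move=> y0 /rootP py; apply/rootP.
rewrite /reciprocal map_polyZ hornerZ map_Poly map_rev horner_Poly_rev ?invr_eq0 //.
by rewrite invrK -map_Poly polyseqK py !mulr0.
Qed.

Lemma reciprocal_irredp_root g y :
  g \is monic -> irreducible_poly g -> g`_0 != 0 ->
  y != 0 -> root g^i y -> root g^i y^-1 -> reciprocal g = g.
Proof.
move=> mg ig g0 y0 rg rgi.
have gr : g %| reciprocal g.
  exact: irredp_dvdp_root mg ig rgi (root_reciprocal y0 rg).
apply/esym/eqP; rewrite -eqp_monic ?reciprocal_monic // -dvdp_size_eqp //.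
by rewrite size_reciprocal.
Qed.

Lemma poly_exponent_prim_root f e y : f \is monic -> irreducible_poly f ->
  poly_exponent f e -> root f^i y -> e.-primitive_root y.
Proof.
move=> mf irf [e_gt0 fe e_min] ry.
have ye : y ^+ e = 1.
  by apply/eqP; rewrite -root_map_Xn_sub1 (root_map_dvdp fe).
have [m pm me] := prim_order_exists e_gt0 ye.
suff <- : m = e by [].
apply/eqP; rewrite eqn_leq (dvdn_leq e_gt0 me) e_min ?(prim_order_gt0 pm) //.
by apply: (irredp_dvdp_root mf irf ry); rewrite root_map_Xn_sub1 prim_expr_order.
Qed.

Lemma poly_exponent_root_coprime f e y : e.-primitive_root y ->
  f \is monic -> irreducible_poly f -> poly_exponent f e ->
  exists2 k, coprime k e & root f^i (y ^+ k).
Proof.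
move=> py mf irf ex; have [_ fe _] := ex.
have : f^i %| \prod_(0 <= j < e) ('X - (y ^+ j)%:P).
  by rewrite (factor_Xn_sub_1 py) -map_poly_Xn_sub1 dvdp_map.
case/dvdp_prod_XsubC => m; case: (mask m _) => [|j js] Dm.
  have [+ _] := irf.
  by rewrite -(size_map_poly (in_alg L)) (eqp_size Dm) big_nil size_poly1.
have rj : root f^i (y ^+ j).
  by rewrite (eqp_root Dm) big_cons rootM root_XsubC eqxx.
exists j => //.
by rewrite -(prim_root_exp_coprime _ py) (poly_exponent_prim_root mf irf ex rj).
Qed.

Lemma Fadjoin_expr_coprime (K : {subfield L}) y k N : (0 < N)%N ->
  y ^+ N = 1 -> coprime k N -> <<K; y ^+ k>>%VS = <<K; y>>%VS.
Proof.
move=> N_gt0 yN ckN.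
have yk : y = (y ^+ k) ^+ (k ^ (totient N).-1).
  rewrite -exprM -expnS prednK ?totient_gt0 //.
  by rewrite -(expr_mod _ yN) (Euler_exp_totient ckN) (expr_mod _ yN) expr1.
apply/eqP; rewrite eqEsubv; apply/andP; split; apply/FadjoinP; split.
- exact: subv_adjoin.
- exact/rpredX/memv_adjoin.
- exact: subv_adjoin.
- by rewrite {1}yk; apply/rpredX/memv_adjoin.
Qed.

Lemma SRIM_minPoly_expr h y k : SRIM h -> root h^i y ->
  <<1; y ^+ k>>%VS = <<1; y>>%VS ->
  exists g, [/\ SRIM g, root g^i (y ^+ k) & size g = size h].
Proof.
move=> [mh [ih [h0 hrec]]] rh Fyk; set z := y ^+ k.
have [g [Dg mg ig]] := minPoly1_irr z.
have rg : root g^i z by rewrite -Dg root_minPoly.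
have y0 : y != 0.
  apply: contra_neq h0 => y0; move: rh.
  by rewrite y0 rootE horner_coef0 coef_map fmorph_eq0 => /eqP.
have z0 : z != 0 by rewrite expf_neq0.
have g0 := irredp_coef0_neq0 ig rg z0.
have rgi : root g^i z^-1.
  have hg : h %| g \Po 'X^k.
    by apply: (irredp_dvdp_root mh ih rh); rewrite root_map_comp_Xn.
  have rhi : root h^i y^-1 by rewrite -hrec root_reciprocal.
  by rewrite /z -exprVn -root_map_comp_Xn (root_map_dvdp hg).
have Sg : SRIM g.
  by do 3?split=> //; apply: reciprocal_irredp_root mg ig g0 z0 rg rgi.
exists g; split=> //.
rewrite -(size_map_poly (in_alg L) g) -(size_map_poly (in_alg L) h) -Dg.
by rewrite -(minPoly1_irredp mh ih rh) !size_minPoly !adjoin_degreeE Fyk.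
Qed.

End RootsInExtension.

Lemma has_SRIM_factor_comp_Xn_exponent (F : fieldType) (M e d : nat)
    (f1 f2 : {poly F}) :
  (0 < M)%N ->
  f1 \is monic -> irreducible_poly f1 -> poly_exponent f1 e ->
  f2 \is monic -> irreducible_poly f2 -> poly_exponent f2 e ->
  has_SRIM_factor (f1 \Po 'X^M) d -> has_SRIM_factor (f2 \Po 'X^M) d.
Proof.
move=> M_gt0 mf1 if1 ex1 mf2 if2 ex2 [h [Sh hf1 <-]].
have [_ [ih _]] := Sh.
have [L _ [c rc _]] := irredp_FAdjoin ih.
have ra : root f1^i (c ^+ M) by rewrite -root_map_comp_Xn (root_map_dvdp hf1).
have pa := poly_exponent_prim_root mf1 if1 ex1 ra.
have Me_gt0 : (0 < M * e)%N by rewrite muln_gt0 M_gt0 (prim_order_gt0 pa).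
have [k cke rk] := poly_exponent_root_coprime pa mf2 if2 ex2.
have [t ckt] := exists_coprime_addmul cke Me_gt0.
have cMe : c ^+ (M * e) = 1 by rewrite exprM (prim_expr_order pa).
have cktM : (c ^+ (k + e * t)) ^+ M = (c ^+ M) ^+ k.
  by rewrite -exprM mulnC exprM exprD exprM (prim_expr_order pa) expr1n mulr1.
have Fck := Fadjoin_expr_coprime 1%AS Me_gt0 cMe ckt.
have [g [Sg rg <-]] := SRIM_minPoly_expr Sh rc Fck.
have [mg [ig _]] := Sg.
exists g; split=> //.
by apply: (irredp_dvdp_root mg ig rg); rewrite root_map_comp_Xn cktM.
Qed.

Theorem lemma4p17 (F : finFieldType) (M : nat) (f1 f2 : {poly F}) (n e : nat) :
  (2 <= M)%N ->
  f1 \is monic -> irreducible_poly f1 -> f1 != 'X ->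
  f2 \is monic -> irreducible_poly f2 -> f2 != 'X ->
  (size f1).-1 = n -> (size f2).-1 = n ->
  poly_exponent f1 e -> poly_exponent f2 e ->
  forall l : nat, (1 <= l)%N ->
    (has_SRIM_factor (f1 \Po 'X^M) (2 * l) <->
     has_SRIM_factor (f2 \Po 'X^M) (2 * l)).
Proof.
move=> M_ge2 mf1 if1 _ mf2 if2 _ _ _ ex1 ex2 l _.
have M_gt0 : (0 < M)%N by apply: ltnW.
split; [exact: (has_SRIM_factor_comp_Xn_exponent M_gt0 mf1 if1 ex1 mf2 if2 ex2)
       | exact: (has_SRIM_factor_comp_Xn_exponent M_gt0 mf2 if2 ex2 mf1 if1 ex1)].
Qed.
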